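(* Let $\bar{\mathcal A}\subseteq\mathcal A$ and $\bar{\mathcal T}\subseteq\mathcal T$ with $|\bar{\mathcal A}|\ge|\bar{\mathcal T}|\ge 1$. Let $\bar{\mathcal E}=\bar{\mathcal A}\times\bar{\mathcal T}$ and assume $|\bar{\mathcal E}|>1$. Suppose the robustness margin is strictly positive, $r_{\bar{\mathcal A},\bar{\mathcal T}}(\mathcal W)>0$. Then every bottleneck minimising assignment $\Pi=\{\pi_{i,j}\}\in\mathcal B_{\bar{\mathcal A},\bar{\mathcal T}}(\bar{\mathcal E},\mathcal W)$ satisfies $\pi_{i^*,j^*}=1$ for every maximum-margin bottleneck edge $(i^*,j^* )\in e_{\bar{\mathcal A},\bar{\mathcal T}}(\mathcal W)$.
   Context: Let $\mathcal A$ be a finite set of agents with $|\mathcal A|=m>1$ and $\mathcal T$ a finite set of tasks with $m\ge|\mathcal T|=n\ge 1$. Let $\mathcal W=\{w_{i,j}\ge 0:(i,j)\in\mathcal A\times\mathcal T\}$ be given assignment weights. An assignment is a family $\Pi=\{\pi_{i,j}\in\{0,1\}:(i,j)\in\mathcal A\times\mathcal T\}$ ($\pi_{i,j}=1$ means agent $i$ is assigned task $j$). For $\bar{\mathcal A}\subseteq\mathcal A$, $\bar{\mathcal T}\subseteq\mathcal T$ and an edge set $\hat{\mathcal E}\subseteq\bar{\mathcal A}\times\bar{\mathcal T}$, the set of admissible assignments $\mathcal P_{\bar{\mathcal A},\bar{\mathcal T}}(\hat{\mathcal E})$ is the set of assignments $\Pi$ with $\sum_{i:(i,j)\in\hat{\mathcal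 E}}\pi_{i,j}=1$ for every $j\in\bar{\mathcal T}$ and $\sum_{j:(i,j)\in\hat{\mathcal E}}\pi_{i,j}\le 1$ for every $i\in\bar{\mathcal A}$. Define $b(\Pi,\hat{\mathcal E},\mathcal W)=\max_{(i,j)\in\hat{\mathcal E}}\pi_{i,j}w_{i,j}$; the bottleneck weight $B_{\bar{\mathcal A},\bar{\mathcal T}}(\hat{\mathcal E},\mathcal W)=\min_{\Pi\in\mathcal P_{\bar{\mathcal A},\bar{\mathcal T}}(\hat{\mathcal E})}b(\Pi,\hat{\mathcal E},\mathcal W)$ (with $\min\emptyset=+\infty$); the set of bottleneck minimising assignments $\mathcal B_{\bar{\mathcal A},\bar{\mathcal T}}(\hat{\mathcal E},\mathcal W)=\arg\min_{\Pi\in\mathcal P_{\bar{\mathcal A},\bar{\mathcal T}}(\hat{\mathcal E})}b(\Pi,\hat{\mathcal E},\mathcal W)$; and $E_{\bar{\mathcal A},\bar{\mathcal T}}(\hat{\mathcal E},\mathcal W)=\{(i,j)\in\hat{\mathcal E}: w_{i,j}=B_{\bar{\mathcal A},\bar{\mathcal T}}(\hat{\mathcal E},\mathcal W)\}$. For the complete edge set $\bar{\mathcal E}=\bar{\mathcal A}\times\bar{\mathcal T}$ with $|\bar{\mathcal E}|>1$, the set of maximum-margin bottleneck edges is $e_{\bar{\mathcal A},\bar{\mathcal T}}(\mathcal W)=\arg\max_{(i,j)\in E_{\bar{\mathcal A},\bar{\mathcal T}}(\bar{\mathcal E},\mathcal W)}B_{\bar{\mathcal A},\bar{\mathcal T}}(\bar{\mathcal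 E}\setminus\{(i,j)\},\mathcal W)$ and the robustness margin is $r_{\bar{\mathcal A},\bar{\mathcal T}}(\mathcal W)=\max_{(i,j)\in E_{\bar{\mathcal A},\bar{\mathcal T}}(\bar{\mathcal E},\mathcal W)}\big(B_{\bar{\mathcal A},\bar{\mathcal T}}(\bar{\mathcal E}\setminus\{(i,j)\},\mathcal W)-w_{i,j}\big)$. If $|\bar{\mathcal E}|=1$, one sets $e_{\bar{\mathcal A},\bar{\mathcal T}}(\mathcal W)=\bar{\mathcal E}$ and $r_{\bar{\mathcal A},\bar{\mathcal T}}(\mathcal W)=\infty$. *)

From HB Require Import structures.
From mathcomp Require Import all_boot all_order all_algebra.
Set Implicit Arguments. Unset Strict Implicit. Unset Printing Implicit Defensive.
Import Order.TTheory GRing.Theory Num.Theory.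
Local Open Scope ring_scope.

(* Extended values R ∪ {+oo}: [None] stands for +oo. *)
Definition le_ext (R : realDomainType) (x y : option R) : bool :=
  match x, y with
  | _, None => true
  | None, Some _ => false
  | Some a, Some b => a <= b
  end.

Definition pos_ext (R : realDomainType) (x : option R) : bool :=
  match x with None => true | Some a => 0 < a end.

Section Bottleneck.
Variables (R : realDomainType) (A T : finType) (w : A -> T -> R).

Definition assignment := {ffun A * T -> bool}.

Definition admissible (Abar : {set A}) (Tbar : {set T}) (E : {set A * T})
    (p : assignment) : bool :=
  [forall j in Tbar, (\sum_(i | (i, j) \in E) (p (i, j) : nat))%N == 1%N] &&
  [forall i in Abar, (\sum_(j | (i, j) \in E) (p (i, j) : nat))%N <= 1]%N.

Definition bval (E : {set A * T}) (p : assignment) : R :=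
  \big[Num.max/0]_(e in E) (if p e then w e.1 e.2 else 0).

(* Bottleneck weight B_{Abar,Tbar}(E, W), with min of the empty set = +oo (None). *)
Definition Bw (Abar : {set A}) (Tbar : {set T}) (E : {set A * T}) : option R :=
  let S := [set p | admissible Abar Tbar E p] in
  if [pick p in S] is Some p0 then Some (\big[Num.min/bval E p0]_(p in S) bval E p)
  else None.

Definition Bmin (Abar : {set A}) (Tbar : {set T}) (E : {set A * T}) : {set assignment} :=
  [set p | admissible Abar Tbar E p &&
           [forall q, admissible Abar Tbar E q ==> (bval E p <= bval E q)]].

Definition Eb (Abar : {set A}) (Tbar : {set T}) (E : {set A * T}) : {set A * T} :=
  [set e in E | Some (w e.1 e.2) == Bw Abar Tbar E].

Definition Ebar (Abar : {set A}) (Tbar : {set T}) : {set A * T} := setX Abar Tbar.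

Definition margin (Abar : {set A}) (Tbar : {set T}) (e : A * T) : option R :=
  omap (fun v => v - w e.1 e.2) (Bw Abar Tbar (Ebar Abar Tbar :\ e)).

Definition emax (Abar : {set A}) (Tbar : {set T}) : {set A * T} :=
  if #|Ebar Abar Tbar| == 1%N then Ebar Abar Tbar else
  [set e in Eb Abar Tbar (Ebar Abar Tbar) |
     [forall e' in Eb Abar Tbar (Ebar Abar Tbar),
        le_ext (Bw Abar Tbar (Ebar Abar Tbar :\ e'))
               (Bw Abar Tbar (Ebar Abar Tbar :\ e))]].

Definition is_robustness_margin (Abar : {set A}) (Tbar : {set T}) (r : option R) : Prop :=
  if #|Ebar Abar Tbar| == 1%N then r = None else
  (exists2 e, e \in Eb Abar Tbar (Ebar Abar Tbar) & margin Abar Tbar e = r) /\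
  (forall e, e \in Eb Abar Tbar (Ebar Abar Tbar) -> le_ext (margin Abar Tbar e) r).

End Bottleneck.

From mathcomp Require Import all_boot all_order all_algebra.
Set Implicit Arguments. Unset Strict Implicit. Unset Printing Implicit Defensive.
Import Order.TTheory GRing.Theory Num.Theory.
Local Open Scope ring_scope.

(* If a bottleneck minimiser p avoided a bottleneck edge e, then p would still
   be admissible on Ebar \ {e}, so B(Ebar \ {e}) <= b(p) = B(Ebar) = w_e: the
   margin of e would be nonpositive.  Since e has maximum B(Ebar \ {e}) among
   the bottleneck edges, which all have weight B(Ebar), every bottleneck edge
   would have nonpositive margin, contradicting r > 0.  Apart from |Ebar| > 1,
   which rules out the degenerate case of emax and r, the sign and cardinality
   hypotheses are not needed. *)

Lemma le_ext_trans (R : realDomainType) (x y z : option R) :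
  le_ext x y -> le_ext y z -> le_ext x z.
Proof.
by case: x => [a|]; case: y => [b|]; case: z => [c|] //=; apply: le_trans.
Qed.

Lemma le_ext_shift_npos (R : realDomainType) (x : option R) (a : R) :
  le_ext x (Some a) -> ~~ pos_ext (omap (fun v => v - a) x).
Proof. by case: x => [b|] //= hba; rewrite subr_gt0 -leNgt. Qed.

Section BottleneckEdge.
Variables (R : realDomainType) (A T : finType) (w : A -> T -> R).
Variables (Abar : {set A}) (Tbar : {set T}).

Lemma admissible_setD1 (E : {set A * T}) (p : assignment A T) (e : A * T) :
  p e = false -> admissible Abar Tbar E p -> admissible Abar Tbar (E :\ e) p.
Proof.
move=> pe /andP [/forallP hT /forallP hA].
have sum_setD1 (I : finType) (g : I -> A * T) :
    (\sum_(i | g i \in E :\ e) (p (g i) : nat)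
     = \sum_(i | g i \in E) (p (g i) : nat))%N.
  rewrite big_mkcond [RHS]big_mkcond; apply: eq_bigr => i _.
  by rewrite in_setD1; case: eqP => [->|]; rewrite ?pe ?if_same.
apply/andP; split.
- apply/forallP => j; apply/implyP => hj.
  by rewrite (sum_setD1 _ (fun i => (i, j))); move/implyP: (hT j); apply.
- apply/forallP => i; apply/implyP => hi.
  by rewrite (sum_setD1 _ (fun j => (i, j))); move/implyP: (hA i); apply.
Qed.

Lemma Bw_le_bval (E : {set A * T}) (p : assignment A T) :
  admissible Abar Tbar E p -> le_ext (Bw w Abar Tbar E) (Some (bval w E p)).
Proof.
move=> hp; rewrite /Bw; case: pickP => [p0 _ | none]; last first.
  by have := none p; rewrite inE hp.
by apply: bigmin_le_cond; rewrite inE.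
Qed.

Lemma Bw_Bmin (E : {set A * T}) (p : assignment A T) :
  p \in Bmin w Abar Tbar E -> Bw w Abar Tbar E = Some (bval w E p).
Proof.
rewrite inE => /andP [hp /forallP hmin].
rewrite /Bw; case: pickP => [p0 hp0 | none]; last by have := none p; rewrite inE hp.
congr Some; apply/eqP; rewrite eq_le bigmin_le_cond ?inE //=.
apply: le_bigmin => [|q]; rewrite ?inE.
  by move: hp0; rewrite inE; apply/implyP/hmin.
by apply/implyP/hmin.
Qed.

Lemma Eb_weight (E : {set A * T}) (e e' : A * T) :
  e \in Eb w Abar Tbar E -> e' \in Eb w Abar Tbar E -> w e.1 e.2 = w e'.1 e'.2.
Proof. by rewrite !inE => /andP [_ /eqP <-] /andP [_ /eqP [->]]. Qed.

Lemma bval_subset (E E' : {set A * T}) (p : assignment A T) :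
  E' \subset E -> bval w E' p <= bval w E p.
Proof. by move=> /subsetP sub; apply: sub_bigmax => x /sub. Qed.

Lemma Bw_setD1_unused_bottleneck (E : {set A * T}) (p : assignment A T) (e : A * T) :
  p \in Bmin w Abar Tbar E -> e \in Eb w Abar Tbar E -> p e = false ->
  le_ext (Bw w Abar Tbar (E :\ e)) (Some (w e.1 e.2)).
Proof.
move=> hp; rewrite inE (Bw_Bmin hp) => /andP [_ /eqP [->]] pe.
apply: (le_ext_trans (Bw_le_bval _)); last exact: bval_subset (subD1set E e).
by apply: admissible_setD1 pe _; move: hp; rewrite inE => /andP [].
Qed.

End BottleneckEdge.

Theorem proposition1 (R : realDomainType) (A T : finType) (w : A -> T -> R)
  (hw : forall i j, 0 <= w i j)
  (hm : (1 < #|A|)%N) (hnm : (#|T| <= #|A|)%N) (hn : (1 <= #|T|)%N)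
  (Abar : {set A}) (Tbar : {set T})
  (hAT : (#|Tbar| <= #|Abar|)%N) (hT : (1 <= #|Tbar|)%N)
  (hE : (1 < #|Ebar Abar Tbar|)%N)
  (r : option R) (hr : is_robustness_margin w Abar Tbar r) (hrpos : pos_ext r) :
  forall p, p \in Bmin w Abar Tbar (Ebar Abar Tbar) ->
  forall e, e \in emax w Abar Tbar -> p e = true.
Proof.
move=> p hp e.
have not_single : (#|Ebar Abar Tbar| == 1%N) = false by rewrite gtn_eqF.
rewrite /emax not_single inE => /andP [he /forallP emax_e].
move: hr; rewrite /is_robustness_margin not_single => -[[e0 he0 margin_e0] _].
apply/negPn/negP => /negbTE pe.
have le_e0_e := implyP (emax_e e0) he0.
have := le_ext_shift_npos (le_ext_trans le_e0_e (Bw_setD1_unused_bottleneck hp he pe)).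
by rewrite -(Eb_weight he0 he); move: hrpos; rewrite -margin_e0 => ->.
Qed.
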